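(* Let $P_X$ and an $M$-type distribution $P_{\hat X}$ be defined on the same discrete alphabet $\mathcal{X}$. Then for every $\gamma>0$ and $a>0$, $$E_\gamma(P_{\hat X}\|P_X)\ge1-\gamma\,\mathbb{P}\big[\imath_X(X)<\log(\gamma M)+a\big]-\exp(-a),$$ where $X\sim P_X$.
   Context: A distribution on a discrete set is an $M$-type if all its probabilities are integer multiples of $1/M$. $\imath_X(x):=\log\frac1{P_X(x)}$. $E_\gamma(P\|Q):=\sup_{\mathcal{A}}\{P(\mathcal{A})-\gamma Q(\mathcal{A})\}$. *)

From Stdlib Require Import Reals.
Open Scope R_scope.

(* Discrete alphabet: (an enumeration of) a countable set, modelled as nat.
   A distribution is a pmf p : nat -> R, nonnegative, summing to 1. *)
Definition is_distr (p : nat -> R) : Prop :=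
  (forall x, 0 <= p x) /\ infinite_sum p 1.

Definition M_type (M : nat) (p : nat -> R) : Prop :=
  forall x, exists k : nat, p x = INR k / INR M.

Definition prob_is (p : nat -> R) (A : nat -> bool) (v : R) : Prop :=
  infinite_sum (fun x => if A x then p x else 0) v.

Definition Egamma_is (gamma : R) (P Q : nat -> R) (E : R) : Prop :=
  is_lub (fun r => exists (A : nat -> bool) (vP vQ : R),
             prob_is P A vP /\ prob_is Q A vQ /\ r = vP - gamma * vQ) E.

(* information density i_X(x) = log (1 / P_X(x)) (natural log; +infinity if
   P_X(x) = 0).  The event { x | i_X(x) < t }. *)
Definition info_lt (p : nat -> R) (t : R) : nat -> bool :=
  fun x => if Rlt_dec 0 (p x) then
             (if Rlt_dec (ln (/ p x)) t then true else false)
           else false.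

(** On the support [D] of the M-type distribution every probability is at
    least [1/M].  Outside the event [B = {i_X < log (gamma M) + a}] one has
    [P_X(x) <= exp(-a) / (gamma M) <= exp(-a) P_Xh(x) / gamma], so summing
    over [D] gives [gamma P_X(D) <= gamma P_X(B) + exp(-a)].  Since
    [P_Xh(D) = 1], the event [D] alone already witnesses
    [E_gamma >= 1 - gamma P_X(D)]. *)

From Stdlib Require Import Reals Lra Lia.
Open Scope R_scope.

Lemma infinite_sum_ext (f g : nat -> R) (u : R) :
  (forall n, f n = g n) -> infinite_sum f u -> infinite_sum g u.
Proof.
  intros Hfg; apply Un_cv_ext; intro n; apply sum_eq; auto.
Qed.

Lemma infinite_sum_scal (c : R) (f : nat -> R) (u : R) :
  infinite_sum f u -> infinite_sum (fun n => c * f n) (c * u).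
Proof.
  intros Hf.
  apply Un_cv_ext with (un := fun n => c * sum_f_R0 f n).
  - intro n; rewrite scal_sum; apply sum_eq; intros; ring.
  - apply CV_mult; [intros e He; exists 0%nat; intros; unfold Rdist; 
      rewrite Rminus_diag, Rabs_R0; lra | exact Hf].
Qed.

Lemma infinite_sum_plus (f g : nat -> R) (u v : R) :
  infinite_sum f u -> infinite_sum g v ->
  infinite_sum (fun n => f n + g n) (u + v).
Proof.
  intros Hf Hg.
  apply Un_cv_ext with (un := fun n => sum_f_R0 f n + sum_f_R0 g n).
  - intro n; symmetry; apply plus_sum.
  - exact (CV_plus _ _ _ _ Hf Hg).
Qed.

Lemma infinite_sum_le (f g : nat -> R) (u v : R) :
  (forall n, f n <= g n) -> infinite_sum f u -> infinite_sum g v -> u <= v.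
Proof.
  intros Hfg Hf Hg.
  exact (Rle_cv_lim (fun n => sum_Rle f g n (fun i _ => Hfg i)) Hf Hg).
Qed.

(* Masked partial sums are nondecreasing and bounded by the total mass 1. *)
Lemma prob_is_exists (p : nat -> R) (A : nat -> bool) :
  is_distr p -> exists v, prob_is p A v.
Proof.
  intros [Hp Hs].
  set (pA := fun x => if A x then p x else 0).
  assert (HpA : forall x, 0 <= pA x <= p x)
    by (intro x; unfold pA; destruct (A x); specialize (Hp x); lra).
  assert (Hgrow : forall f, (forall x, 0 <= f x) -> Un_growing (sum_f_R0 f))
    by (intros f Hf n; simpl; specialize (Hf (S n)); lra).
  assert (Hbound : bound (EUn (sum_f_R0 pA))).
  { exists 1; intros r [n ->].
    apply Rle_trans with (sum_f_R0 p n).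
    - apply sum_Rle; intros; apply HpA.
    - exact (growing_ineq _ _ (Hgrow p Hp) Hs n). }
  destruct (growing_cv _ (Hgrow pA (fun x => proj1 (HpA x))) Hbound) as [v Hv].
  exists v; exact Hv.
Qed.

Definition support (p : nat -> R) : nat -> bool :=
  fun x => if Rlt_dec 0 (p x) then true else false.

Lemma prob_is_support (p : nat -> R) :
  is_distr p -> prob_is p (support p) 1.
Proof.
  intros [Hp Hs]; apply (infinite_sum_ext p); [|exact Hs].
  intro x; unfold support; destruct (Rlt_dec 0 (p x)); [reflexivity|].
  specialize (Hp x); lra.
Qed.

Lemma M_type_inv_le (M : nat) (p : nat -> R) (x : nat) :
  M_type M p -> 0 < p x -> / INR M <= p x.
Proof.
  intros HM Hpos; destruct (HM x) as [[|k] Hk]; rewrite Hk in Hpos |- *.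
  - unfold Rdiv in Hpos; rewrite Rmult_0_l in Hpos; lra.
  - unfold Rdiv; rewrite <- (Rmult_1_l (/ INR M)) at 1.
    apply Rmult_le_compat_r.
    + destruct M; [simpl; rewrite Rinv_0; lra|].
      left; apply Rinv_0_lt_compat, lt_0_INR; lia.
    + apply (le_INR 1); lia.
Qed.

Lemma info_lt_false_le_exp (p : nat -> R) (t : R) (x : nat) :
  0 < p x -> info_lt p t x = false -> p x <= exp (- t).
Proof.
  unfold info_lt; intros Hpos.
  destruct (Rlt_dec 0 (p x)) as [_|]; [|lra].
  destruct (Rlt_dec (ln (/ p x)) t) as [|Hge]; [discriminate|intros _].
  rewrite ln_Rinv in Hge by exact Hpos.
  rewrite <- (exp_ln (p x)) by exact Hpos.
  destruct (Rle_lt_dec (- t) (ln (p x))) as [Hln|Hln]; [|left; apply exp_increasing, Hln].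
  replace (ln (p x)) with (- t) by lra; right; reflexivity.
Qed.

Lemma exp_neg_ln_plus (y a : R) :
  0 < y -> exp (- (ln y + a)) = / y * exp (- a).
Proof.
  intros Hy; rewrite Ropp_plus_distr, exp_plus, exp_Ropp, exp_ln by exact Hy.
  reflexivity.
Qed.

Section Pointwise.

Variables (PX PXh : nat -> R) (M : nat) (gamma a : R).
Hypotheses (HPX : forall x, 0 <= PX x) (HPXh : forall x, 0 <= PXh x)
  (HM : (0 < M)%nat) (HMt : M_type M PXh) (Hgamma : 0 < gamma).

Lemma mass_off_info_event (x : nat) :
  support PXh x = true ->
  info_lt PX (ln (gamma * INR M) + a) x = false ->
  gamma * PX x <= exp (- a) * PXh x.
Proof.
  unfold support; destruct (Rlt_dec 0 (PXh x)) as [Hpos|]; [intros _|discriminate].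
  intros Hinfo.
  assert (HMr : 0 < INR M) by (apply lt_0_INR; exact HM).
  assert (Hea := exp_pos (- a)).
  destruct (Req_dec (PX x) 0) as [->|Hnz].
  { rewrite Rmult_0_r; apply Rmult_le_pos; lra. }
  assert (HPpos : 0 < PX x) by (pose proof (HPX x); lra).
  assert (Hle := info_lt_false_le_exp PX _ x HPpos Hinfo).
  rewrite exp_neg_ln_plus in Hle by (apply Rmult_lt_0_compat; lra).
  assert (Hinv := M_type_inv_le M PXh x HMt Hpos).
  apply Rle_trans with (exp (- a) * / INR M).
  - apply Rmult_le_compat_l with (r := gamma) in Hle; [|lra].
    rewrite Rinv_mult in Hle.
    replace (gamma * (/ gamma * / INR M * exp (- a))) with (exp (- a) * / INR M)
      in Hle by (field; lra).
    exact Hle.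
  - apply Rmult_le_compat_l; lra.
Qed.

Lemma masked_mass_bound (x : nat) :
  gamma * (if support PXh x then PX x else 0) <=
  gamma * (if info_lt PX (ln (gamma * INR M) + a) x then PX x else 0)
    + exp (- a) * PXh x.
Proof.
  assert (Hea := exp_pos (- a)); assert (HPx := HPX x); assert (HPhx := HPXh x).
  destruct (support PXh x) eqn:HD,
           (info_lt PX (ln (gamma * INR M) + a) x) eqn:HB; try nra.
  apply mass_off_info_event in HB; [lra|exact HD].
Qed.

End Pointwise.

Theorem mainTheorem6 (PX PXh : nat -> R) (M : nat) (gamma a : R) :
  is_distr PX -> is_distr PXh -> (0 < M)%nat -> M_type M PXh ->
  0 < gamma -> 0 < a ->
  forall E prb : R,
    Egamma_is gamma PXh PX E ->
    prob_is PX (info_lt PX (ln (gamma * INR M) + a)) prb ->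
    E >= 1 - gamma * prb - exp (- a).
Proof.
  intros HX HXh HM HMt Hgamma _ E prb [HE _] Hprb.
  destruct (prob_is_exists PX (support PXh) HX) as [vD HvD].
  assert (HED : 1 - gamma * vD <= E).
  { apply HE; exists (support PXh), 1, vD.
    repeat split; [apply prob_is_support, HXh | exact HvD]. }
  assert (HvD_bound : gamma * vD <= gamma * prb + exp (- a) * 1).
  { apply (infinite_sum_le _ _ _ _
             (masked_mass_bound PX PXh M gamma a (proj1 HX) (proj1 HXh) HM HMt Hgamma)).
    - exact (infinite_sum_scal _ _ _ HvD).
    - apply infinite_sum_plus; apply infinite_sum_scal; [exact Hprb | exact (proj2 HXh)]. }
  lra.
Qed.
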